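(* Let $\pi:(X,T)\to(Y,T)$ be an almost one-to-one (respectively proximal, equicontinuous, distal) extension between minimal systems. Then for every $d\in\mathbb{N}$, $\pi^{(d)}:(N_d(X),\mathcal{G}_d(T))\to(N_d(Y),\mathcal{G}_d(T))$ is also almost one-to-one (respectively proximal, equicontinuous, distal).
   Context: $\pi^{(d)}=\pi\times\cdots\times\pi$; $N_d(X)=\overline{\{(T^{p+q}x,\dots,T^{p+dq}x)\}}$; $\mathcal{G}_d(T)=\langle T\times\cdots\times T,\ T\times T^2\times\cdots\times T^d\rangle$. For an extension $\phi:(X,G)\to(Y,G)$ with $R_\phi=\{(x,x'):\phi(x)=\phi(x')\}$: almost one-to-one means some fibre is a singleton; proximal means every pair in $R_\phi$ satisfies $\inf_g\rho(gx,gx')=0$; distal means no pair of distinct points of $R_\phi$ is proximal; equicontinuous means for every $\varepsilon>0$ there is $\delta>0$ with $\sup_g\rho(gx,gx')<\varepsilon$ whenever $(x,x')\in R_\phi$, $\rho(x,x')<\delta$. *)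

From HB Require Import structures.
From mathcomp Require Import all_boot all_order all_algebra.
From mathcomp Require Import all_classical all_reals all_analysis.
Set Implicit Arguments. Unset Strict Implicit. Unset Printing Implicit Defensive.
Import Order.TTheory GRing.Theory Num.Theory.
Local Open Scope classical_set_scope.
Local Open Scope ring_scope.

(* Z-action generated by a homeomorphism T with inverse Tinv:
   iterz T Tinv n = T^n  (n : int). *)
Definition iterz {X : Type} (T Tinv : X -> X) (n : int) : X -> X :=
  match n with
  | Posz k => iter k T
  | Negz k => iter k.+1 Tinv
  end.

Definition minimal_sys {X : topologicalType} (T Tinv : X -> X) : Prop :=
  forall x : X, closure [set iterz T Tinv n x | n in [set: int]] = [set: X].

(* The diagonal-type element tau_{p,q} = T^{p+q} x T^{p+2q} x ... x T^{p+dq}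
   of G_d(T) = < T x ... x T, T x T^2 x ... x T^d >, acting on X^d
   (represented as row vectors 'rV[X]_d, coordinate i <-> exponent p+(i+1)q).
   Every element of G_d(T) is of this form, and (p,q) |-> tau_{p,q} is onto. *)
Definition tau {X : Type} (T Tinv : X -> X) (d : nat) (pq : int * int)
  (M : 'rV[X]_d) : 'rV[X]_d :=
  \row_(i < d) iterz T Tinv (pq.1 + (i.+1)%:Z * pq.2) (M 0 i).

Definition Nd {X : topologicalType} (T Tinv : X -> X) (d : nat) : set 'rV[X]_d :=
  closure [set M | exists (x : X) (p q : int),
             M = \row_(i < d) iterz T Tinv (p + (i.+1)%:Z * q) x].

Definition pid {X Y : Type} (pi : X -> Y) (d : nat) (M : 'rV[X]_d) : 'rV[Y]_d :=
  map_mx pi M.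

(* Properties of an extension f : (A, G) -> (B, G), where A (resp. B) is the
   invariant subset of the phase space carrying the system, and act is the
   action of the group G (on the domain). The metric rho is expressed through
   the balls of the (pseudo)metric structure: rho(x,x') < e <-> ball x e x'. *)

Definition ext_almost_one_to_one {U V : Type} (A : set U) (B : set V)
  (f : U -> V) : Prop :=
  exists y : V, B y /\ exists x : U, A `&` f @^-1` [set y] = [set x].

Definition proximal_pair {R : numDomainType} {U : pseudoMetricType R}
  {G : Type} (act : G -> U -> U) (x x' : U) : Prop :=
  forall e : R, 0 < e -> exists g : G, ball (act g x) e (act g x').

Definition ext_proximal {R : numDomainType} {U : pseudoMetricType R} {V : Type}
  {G : Type} (act : G -> U -> U) (A : set U) (f : U -> V) : Prop :=
  forall x x', A x -> A x' -> f x = f x' -> proximal_pair act x x'.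

Definition ext_distal {R : numDomainType} {U : pseudoMetricType R} {V : Type}
  {G : Type} (act : G -> U -> U) (A : set U) (f : U -> V) : Prop :=
  forall x x', A x -> A x' -> f x = f x' -> proximal_pair act x x' -> x = x'.

Definition ext_equicontinuous {R : numDomainType} {U : pseudoMetricType R}
  {V : Type} {G : Type} (act : G -> U -> U) (A : set U) (f : U -> V) : Prop :=
  forall e : R, 0 < e -> exists2 delta : R, 0 < delta &
    forall x x', A x -> A x' -> f x = f x' -> ball x delta x' ->
      forall g : G, ball (act g x) e (act g x').

Arguments pid {X Y} pi d M.
Arguments tau {X} T Tinv d pq M.
Arguments Nd {X} T Tinv d _.

From HB Require Import structures.
From mathcomp Require Import all_boot all_order all_algebra.
From mathcomp Require Import all_classical all_reals all_analysis.
From mathcomp Require Import zify lra.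
Import Order.TTheory GRing.Theory Num.Theory.
Local Open Scope classical_set_scope.
Local Open Scope ring_scope.

(* X^d is compact and pi x ... x pi is continuous, so it maps N_d(X), the
   closure of {(T^{p+q}x, ..., T^{p+dq}x)}, onto the closure of the image of
   that set, which is N_d(Y). Equicontinuity and distality pass to tau_{p,q}
   coordinatewise, and a singleton fibre {x} over y yields the singleton
   fibre {(x, ..., x)} over (y, ..., y).
   Two points of X^d in a common fibre are made simultaneously proximal one
   coordinate at a time, using only the diagonal action of T: if they are
   proximal on a set s of coordinates, compactness gives a limit point
   (Q0, Q1) of their joint orbit with Q0 = Q1 on s; Q0 and Q1 still lie
   coordinatewise in common fibres, so some T^n brings them close at a new
   coordinate j as well, and continuity of T^n transfers this back to a point
   of the original orbit. *)

Lemma closed_equalizer {U V : topologicalType} {f g : U -> V} :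
  hausdorff_space V -> continuous f -> continuous g ->
  closed [set x | f x = g x].
Proof.
move=> hV fc gc x clx; apply: hV => A B fA gB.
have nfA : nbhs x (f @^-1` A) := fc x A fA.
have [z [fgz [Az Bz]]] := clx _ (filterI nfA (gc x B gB)).
by exists (f z); split; last rewrite fgz.
Qed.

Lemma image_closure_compact {U V : topologicalType} (f : U -> V) (A : set U) :
  compact [set: U] -> hausdorff_space V -> continuous f ->
  f @` closure A = closure (f @` A).
Proof.
move=> cU hV fc; apply/seteqP; split.
  have clf : closed (f @^-1` closure (f @` A)).
    exact: (continuous_closedP f).1 fc _ (@closed_closure _ _).
  move=> _ [x Ax <-]; apply: clf; apply: closureS Ax => a Aa.
  exact/subset_closure/imageP.
have : closed (f @` closure A).
  apply: compact_closed hV _; apply: continuous_compact.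
    exact: continuous_subspaceT.
  exact: subclosed_compact (@closed_closure _ _) cU _.
by apply: subset_trans; apply/closureS/image_subset/subset_closure.
Qed.

Lemma compact_cluster_directed {W : topologicalType} {I : Type}
    (D : set I) (B : I -> set W) :
  compact [set: W] -> (exists i, D i) ->
  (forall i j, D i -> D j -> exists2 k, D k & B k `<=` B i `&` B j) ->
  (forall i, D i -> B i !=set0) ->
  exists x, forall i, D i -> closure (B i) x.
Proof.
move=> cW D0 Ddir Bne.
have PF := filter_from_proper (filter_from_filter D0 Ddir) Bne.
have [x [_ clx]] := cW _ PF (@filterT _ _ (filter_from_filter D0 Ddir)).
by exists x => i Di C Cx; apply: clx => //; exists i.
Qed.

Lemma metric_eq_ball {R : realType} {U : metricType R} (x y : U) :
  (forall e, 0 < e -> ball x e y) -> x = y.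
Proof.
move=> xy; apply: (close_eq (@metric_hausdorff _ U)).
by rewrite ball_close => e; exact: xy.
Qed.

Lemma continuous_mx_entry {U : topologicalType} {m n} (i : 'I_m) (j : 'I_n) :
  continuous (fun M : 'M[U]_(m, n) => M i j).
Proof.
move=> M B nB; exists (fun k l => if (k == i) && (l == j) then B else setT).
  by move=> k l; case: ifP => [/andP[/eqP-> /eqP->] //|_]; exact: filterT.
by move=> N /(_ i j); rewrite !eqxx.
Qed.

Lemma continuous_map_mx {U V : topologicalType} {m n} {f : U -> V} :
  continuous f -> continuous (map_mx f : 'M[U]_(m, n) -> 'M[V]_(m, n)).
Proof.
move=> fc M B [P nP sPB]; exists (fun i j => f @^-1` P i j).
  by move=> i j; apply: fc; have := nP i j; rewrite mxE.
by move=> N hN; apply: sPB => i j; rewrite mxE; exact: hN.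
Qed.

Lemma mx_hausdorff {U : topologicalType} {m n} :
  hausdorff_space U -> hausdorff_space 'M[U]_(m, n).
Proof.
move=> hU M N MN; apply/matrixP => i j; apply: hU => A B nA nB.
have [Z [AZ BZ]] := MN _ _ (continuous_mx_entry i j M A nA)
  (continuous_mx_entry i j N B nB).
by exists (Z i j).
Qed.

Lemma mx_compact {U : topologicalType} {m n} :
  compact [set: U] -> compact [set: 'M[U]_(m, n)].
Proof.
rewrite !compact_ultra => cU F FU _.
have [M0 _] := filter_ex (@filterT _ F _).
pose entry (ij : 'I_m * 'I_n) (M : 'M[U]_(m, n)) := M ij.1 ij.2.
have entry_onto ij : entry ij @` [set: 'M[U]_(m, n)] = [set: U].
  apply/seteqP; split => // u _.
  exists (\matrix_(i, j) if (i, j) == ij then u else M0 i j) => //.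
  by rewrite /entry mxE -surjective_pairing eqxx.
have lim_entry ij :
    exists p : U, ([set entry ij @` A | A in F] : set_system U) --> p.
  have [p [_ ?]] := cU _ (ultra_image FU (entry_onto ij))
    (ex_intro2 _ _ setT filterT (entry_onto ij)).
  by exists p.
have [p Fp] := choice lim_entry.
exists (\matrix_(i, j) p (i, j)); split => // B [P nP sPB].
suff : F [set N : 'M[U]_(m, n) | forall ij, P ij.1 ij.2 (N ij.1 ij.2)].
  by apply: filterS => N PN; apply: sPB => i j; exact: (PN (i, j)).
apply: (@filter_forall _ _
  (fun ij (N : 'M[U]_(m, n)) => P ij.1 ij.2 (N ij.1 ij.2)) F _) => -[i j].
have /Fp [A FA AP] : nbhs (p (i, j)) (P i j) by have := nP i j; rewrite mxE.
by apply: filterS FA => N AN; rewrite -AP; exists N.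
Qed.

Section Iterz.
Context {X : Type} (T Tinv : X -> X).
Hypotheses (hTK : cancel T Tinv) (hTinvK : cancel Tinv T).

Lemma iterzD1 (n : int) x : iterz T Tinv (n + 1) x = T (iterz T Tinv n x).
Proof.
case: n => [k|[|k]]; first by have -> : Posz k + 1 = Posz k.+1 by lia.
  by rewrite /= hTinvK.
have -> : Negz k.+1 + 1 = Negz k by rewrite !NegzE; lia.
by rewrite /= hTinvK.
Qed.

Lemma iterzN1 (n : int) x : iterz T Tinv (n - 1) x = Tinv (iterz T Tinv n x).
Proof. by rewrite -{2}(subrK 1 n) iterzD1 hTK. Qed.

Lemma iterzD (m n : int) x :
  iterz T Tinv (m + n) x = iterz T Tinv m (iterz T Tinv n x).
Proof.
case: m => k; elim: k => [|k IH].
- by rewrite add0r.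
- have -> : Posz k.+1 + n = Posz k + n + 1 by lia.
  by rewrite iterzD1 IH.
- have -> : Negz 0 + n = n - 1 by rewrite NegzE; lia.
  by rewrite iterzN1.
- have -> : Negz k.+1 + n = Negz k + n - 1 by rewrite !NegzE; lia.
  by rewrite iterzN1 IH.
Qed.

End Iterz.

Lemma equivariant_iterz {X Y : Type} {T Tinv : X -> X} {S Sinv : Y -> Y}
    {f : X -> Y} :
  cancel Tinv T -> cancel S Sinv -> (forall x, f (T x) = S (f x)) ->
  forall n x, f (iterz T Tinv n x) = iterz S Sinv n (f x).
Proof.
move=> hTinvK hSK f_equiv.
have f_inv y : f (Tinv y) = Sinv (f y) by rewrite -{2}(hTinvK y) f_equiv hSK.
have iter_equiv (h : X -> X) (g : Y -> Y) : (forall x, f (h x) = g (f x)) ->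
    forall k x, f (iter k h x) = iter k g (f x).
  by move=> fg; elim=> //= k IH x; rewrite fg IH.
by case=> k x; apply: iter_equiv.
Qed.

Lemma continuous_iterz {X : topologicalType} {T Tinv : X -> X} n :
  continuous T -> continuous Tinv -> continuous (iterz T Tinv n).
Proof.
have iter_cont (f : X -> X) k : continuous f -> continuous (iter k f).
  move=> fc; elim: k => [|k IH] x /=; first exact: cvg_id.
  exact: continuous_comp (IH x) (fc _).
by move=> hT hTinv; case: n => k; apply: iter_cont.
Qed.

Lemma Nd_diag {X : topologicalType} (T Tinv : X -> X) d x :
  Nd T Tinv d (\row_(i < d) x).
Proof.
apply: subset_closure; exists x, 0, 0.
by apply/matrixP => i j; rewrite !mxE mulr0.
Qed.

Lemma eq_pid_entry {X Y : Type} {f : X -> Y} {d} {M M' : 'rV[X]_d} j :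
  pid f d M = pid f d M' -> f (M 0 j) = f (M' 0 j).
Proof. by move=> /(congr1 (fun N : 'rV[Y]_d => N 0 j)); rewrite !mxE. Qed.

Section Extension.
Context {R : realType} {X Y : metricType R}.
Variables (T Tinv : X -> X) (S Sinv : Y -> Y) (pi : X -> Y).
Hypotheses (cX : compact [set: X]).
Hypotheses (hT : continuous T) (hTinv : continuous Tinv).
Hypotheses (hTK : cancel T Tinv) (hTinvK : cancel Tinv T) (hSK : cancel S Sinv).
Hypotheses (hpi : continuous pi) (pi_equiv : forall x, pi (T x) = S (pi x)).

Definition mx_orbit {m n} (P : 'M[X]_(m, n)) :=
  [set map_mx (iterz T Tinv k) P | k in [set: int]].

(* The rows of P are the two points of X^d; they are simultaneously proximal
   under the diagonal action of T on the coordinates listed in s. *)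
Definition proximal_on {d} (P : 'M[X]_(2, d)) (s : seq 'I_d) :=
  forall e, 0 < e -> exists n : int, {in s, forall i,
    ball (iterz T Tinv n (P 0 i)) e (iterz T Tinv n (P 1 i))}.

Lemma proximal_on_orbit_closure {d} {P Q : 'M[X]_(2, d)} {s} :
  closure (mx_orbit P) Q -> proximal_on Q s -> proximal_on P s.
Proof.
move=> clQ hQ e e0; have e3 : 0 < e / 3 by rewrite divr_gt0.
have [n hn] := hQ _ e3.
have /nbhs_ballP [r r0 hr] := continuous_map_mx (continuous_iterz n hT hTinv)
  Q _ (nbhsx_ballx _ _ e3).
have [_ [[m _ <-] /hr [_ bQ]]] := clQ _ (nbhsx_ballx Q _ r0).
exists (n + m) => i si; rewrite !iterzD //.
have := bQ 0 i; have := bQ 1 i; rewrite !mxE => b1 b0.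
have <- : e / 3 + e / 3 + e / 3 = e by lra.
exact: ball_triangle (ball_triangle (ball_sym b0) (hn i si)) b1.
Qed.

Lemma proximal_on_diagonal_limit {d} {P : 'M[X]_(2, d)} {s} :
  proximal_on P s ->
  exists2 Q, closure (mx_orbit P) Q & {in s, forall i, Q 0 i = Q 1 i}.
Proof.
move=> hP.
pose B e := [set map_mx (iterz T Tinv n) P | n in [set n | {in s, forall i,
  ball (iterz T Tinv n (P 0 i)) e (iterz T Tinv n (P 1 i))}]].
have [|e1 e2 e10 e20|e e0|Q hQ] :=
    @compact_cluster_directed _ _ [set e | 0 < e] B (mx_compact cX).
- by exists 1 => /=.
- exists (Num.min e1 e2); first by rewrite /= lt_min e10.
  move=> _ [n hn <-]; split; exists n => // i /hn; apply: le_ball;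
    by rewrite ge_min lexx ?orbT.
- by have [n hn] := hP e e0; exists (map_mx (iterz T Tinv n) P), n.
exists Q; first by apply: closureS (hQ 1 ltr01) => _ [n _ <-]; exists n.
move=> i si; apply: metric_eq_ball => e e0.
have e3 : 0 < e / 3 by rewrite divr_gt0.
have [_ [[n hn <-] [_ bQ]]] := hQ _ e3 _ (nbhsx_ballx Q _ e3).
have := bQ 0 i; have := bQ 1 i; rewrite !mxE => b1 b0.
have <- : e / 3 + e / 3 + e / 3 = e by lra.
exact: ball_triangle (ball_triangle b0 (hn i si)) (ball_sym b1).
Qed.

Lemma fibre_orbit_closure {d} {P Q : 'M[X]_(2, d)} :
  closure (mx_orbit P) Q -> (forall i, pi (P 0 i) = pi (P 1 i)) ->
  forall i, pi (Q 0 i) = pi (Q 1 i).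
Proof.
move=> clQ hP i.
have pi_entry a : continuous (fun N : 'M[X]_(2, d) => pi (N a i)).
  by move=> N; apply: continuous_comp; [exact: continuous_mx_entry|exact: hpi].
apply: (closed_equalizer (@metric_hausdorff _ Y) (pi_entry 0) (pi_entry 1)).
apply: closureS clQ => _ [n _ <-].
by rewrite /= !mxE !(equivariant_iterz hTinvK hSK pi_equiv) hP.
Qed.

Lemma proximal_on_fibre (hprox : ext_proximal (iterz T Tinv) [set: X] pi)
    {d} {P : 'M[X]_(2, d)} :
  (forall i, pi (P 0 i) = pi (P 1 i)) -> forall s, proximal_on P s.
Proof.
move=> hP; elim=> [|j s IH] e e0; first by exists 0.
have [Q clQ eqQ] := proximal_on_diagonal_limit IH.
apply: (proximal_on_orbit_closure clQ) e0 => e' e'0.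
have [n hn] := hprox _ _ I I (fibre_orbit_closure clQ hP j) e' e'0.
by exists n => i; rewrite inE => /predU1P[->|/eqQ->] //; exact: ballxx.
Qed.

Lemma image_pid_Nd : pi @` [set: X] = [set: Y] ->
  forall d, pid pi d @` Nd T Tinv d = Nd S Sinv d.
Proof.
move=> pi_onto d.
have pi_iterz := equivariant_iterz hTinvK hSK pi_equiv.
rewrite /Nd (image_closure_compact _ _ (mx_compact cX)
  (mx_hausdorff (@metric_hausdorff _ Y)) (continuous_map_mx hpi)).
congr closure; apply/seteqP; split.
  move=> _ [_ [x [p [q ->]]] <-]; exists (pi x), p, q.
  by apply/matrixP => i j; rewrite !mxE pi_iterz.
move=> _ [y [p [q ->]]].
have [x _ <-] : (pi @` [set: X]) y by rewrite pi_onto.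
exists (\row_(i < d) iterz T Tinv (p + (i.+1)%:Z * q) x).
  by exists x, p, q.
by apply/matrixP => i j; rewrite !mxE pi_iterz.
Qed.

Lemma almost_one_to_one_pid : ext_almost_one_to_one [set: X] [set: Y] pi ->
  forall d, ext_almost_one_to_one (Nd T Tinv d) (Nd S Sinv d) (pid pi d).
Proof.
move=> [y [_ [x fibre_x]]] d.
have pix : pi x = y by have : [set x] x by []; rewrite -fibre_x => -[_ ->].
exists (\row_(i < d) y); split; first exact: Nd_diag.
exists (\row_(i < d) x); apply/seteqP; split.
  move=> M [_ /= hM]; apply/matrixP => i j; rewrite (ord1 i) mxE.
  suff : ([set: X] `&` pi @^-1` [set y]) (M 0 j) by rewrite fibre_x.
  by split => //=; have := congr1 (fun N : 'rV[Y]_d => N 0 j) hM; rewrite !mxE.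
move=> _ ->; split; first exact: Nd_diag.
by apply/matrixP => i j; rewrite !mxE pix.
Qed.

Lemma proximal_pid : ext_proximal (iterz T Tinv) [set: X] pi ->
  forall d (A : set 'rV[X]_d), ext_proximal (tau T Tinv d) A (pid pi d).
Proof.
move=> hprox d A M M' _ _ MM' e e0.
pose P := \matrix_(r < 2, i < d) if r == 0 then M 0 i else M' 0 i.
have hP i : pi (P 0 i) = pi (P 1 i) by rewrite !mxE /=; exact: eq_pid_entry.
have [n hn] := proximal_on_fibre hprox hP (enum 'I_d) e e0.
exists (n, 0); split => // i j; rewrite !mxE mulr0 addr0.
by have := hn j (mem_enum _ _); rewrite !mxE.
Qed.

End Extension.

Lemma equicontinuous_pid {R : realType} {X : pseudoMetricType R} {Y : Type}
    (T Tinv : X -> X) (pi : X -> Y) :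
  ext_equicontinuous (iterz T Tinv) [set: X] pi ->
  forall d (A : set 'rV[X]_d), ext_equicontinuous (tau T Tinv d) A (pid pi d).
Proof.
move=> heq d A e e0; have [delta delta0 hdelta] := heq e e0.
exists delta => // M M' _ _ MM' [_ bM] g; split => // i j; rewrite !mxE.
exact: hdelta _ _ I I (eq_pid_entry j MM') (bM 0 j) _.
Qed.

Lemma distal_pid {R : realType} {X : pseudoMetricType R} {Y : Type}
    (T Tinv : X -> X) (pi : X -> Y) :
  ext_distal (iterz T Tinv) [set: X] pi ->
  forall d (A : set 'rV[X]_d), ext_distal (tau T Tinv d) A (pid pi d).
Proof.
move=> hdist d A M M' _ _ MM' hprox; apply/matrixP => i j; rewrite (ord1 i).
apply: hdist I I (eq_pid_entry j MM') _ => e e0.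
have [[p q] [_ bM]] := hprox e e0.
by exists (p + j.+1%:Z * q); have := bM 0 j; rewrite !mxE.
Qed.

Theorem lemma5p5 (R : realType) (X Y : metricType R)
  (T Tinv : X -> X) (S Sinv : Y -> Y) (pi : X -> Y)
  (cX : compact [set: X]) (cY : compact [set: Y])
  (hT : continuous T) (hTinv : continuous Tinv)
  (hTK : cancel T Tinv) (hTinvK : cancel Tinv T)
  (hS : continuous S) (hSinv : continuous Sinv)
  (hSK : cancel S Sinv) (hSinvK : cancel Sinv S)
  (minX : minimal_sys T Tinv) (minY : minimal_sys S Sinv)
  (hpi : continuous pi) (pi_onto : pi @` [set: X] = [set: Y])
  (pi_equiv : forall x, pi (T x) = S (pi x)) :
  (forall d : nat, pid pi d @` Nd T Tinv d = Nd S Sinv d) /\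
  (ext_almost_one_to_one [set: X] [set: Y] pi ->
     forall d : nat,
       ext_almost_one_to_one (Nd T Tinv d) (Nd S Sinv d) (pid pi d)) /\
  (ext_proximal (iterz T Tinv) [set: X] pi ->
     forall d : nat,
       ext_proximal (tau T Tinv d) (Nd T Tinv d) (pid pi d)) /\
  (ext_equicontinuous (iterz T Tinv) [set: X] pi ->
     forall d : nat,
       ext_equicontinuous (tau T Tinv d) (Nd T Tinv d) (pid pi d)) /\
  (ext_distal (iterz T Tinv) [set: X] pi ->
     forall d : nat,
       ext_distal (tau T Tinv d) (Nd T Tinv d) (pid pi d)).
Proof.
split; first exact: image_pid_Nd.
split; first exact: almost_one_to_one_pid.
split; first by move=> hprox d; exact: proximal_pid.
split; first by move=> heq d; exact: equicontinuous_pid.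
by move=> hdist d; exact: distal_pid.
Qed.
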